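(* Let $F$ be an indexed group with degree map $\deg$, $G$ a group, $H\le G$, and $\Phi$ a set of homomorphisms $F\to G$ satisfying: (I) if $h\in H$ and $\varphi\in\Phi$ then $f\mapsto h^{-1}\varphi(f)h$ lies in $\Phi$; (II) for any $\varphi\in\Phi$ and $h\in H_\varphi$, the homomorphism $\psi$ with $\psi(f)=\varphi(f)$ for $\deg f=0$ and $\psi(f_1)=\varphi(f_1)h$ for a degree-one element $f_1$ lies in $\Phi$. Then each similarity class in $\Phi$ consists of exactly $|H|$ elements. More precisely, for each $\varphi\in\Phi$: 1) the number of distinct tails of elements of $\Phi$ similar to $\varphi$ equals $|H:H_\varphi|$; 2) for each $\psi\in\Phi$ similar to $\varphi$, the number of elements of $\Phi$ with the same tail as $\psi$ equals $|H_\varphi|$.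
   Context: An indexed group is a group $F$ with a surjective homomorphism $\deg: F\to\mathbb{Z}$. Notation: $x^y=y^{-1}xy$, $H^y=y^{-1}Hy$, $C(X)$ is the centraliser. The $\varphi$-core of $H$ is $H_\varphi=\bigcap_{f\in F}H^{\varphi(f)}\cap C(\{\varphi(f)\mid\deg f=0\})$. The tail of $\varphi\in\Phi$ is the pair $(\varphi_0,\varphi_H)$, where $\varphi_0$ is the restriction of $\varphi$ to $\ker\deg$ and $\varphi_H$ is the map from $F$ to the set of left cosets of $H$ in $G$ sending $f$ to $\varphi(f)H$. Two homomorphisms $\varphi,\psi\in\Phi$ are similar if there is $h\in H$ with $\psi(f)=h\varphi(f)h^{-1}$ for all $f$ of degree zero and $\psi(f)H=h\varphi(f)H$ for all $f\in F$. Cardinalities are cardinal numbers (groups need not be finite). *)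

From mathcomp Require Import all_boot all_order all_algebra.
From mathcomp Require Import boolp classical_sets functions cardinality.
Set Implicit Arguments. Unset Strict Implicit. Unset Printing Implicit Defensive.
Import GRing.Theory Num.Theory.
Local Open Scope classical_set_scope.

Record grp := Grp {
  gcar :> Type;
  gmul : gcar -> gcar -> gcar;
  gone : gcar;
  ginv : gcar -> gcar;
  gmulA : forall x y z, gmul x (gmul y z) = gmul (gmul x y) z;
  gmul1 : forall x, gmul gone x = x;
  gmulV : forall x, gmul (ginv x) x = gone }.

Arguments gmul {g}. Arguments gone {g}. Arguments ginv {g}.

Definition is_hom (F G : grp) (phi : F -> G) : Prop :=
  forall x y, phi (gmul x y) = gmul (phi x) (phi y).

Definition is_subgroup (G : grp) (H : set G) : Prop :=
  H gone /\ (forall x y, H x -> H y -> H (gmul x y)) /\ (forall x, H x -> H (ginv x)).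

Definition is_degree (F : grp) (deg : F -> int) : Prop :=
  (forall x y, deg (gmul x y) = (deg x + deg y)%R) /\ (forall n : int, exists f, deg f = n).

Definition lcoset (G : grp) (x : G) (H : set G) : set G := [set gmul x h | h in H].

(* phi-phi_core: H_phi = (bigcap_f H^{phi f}) cap C({phi f | deg f = 0}),
   where H^y = y^-1 H y; x \in H^y iff y x y^-1 \in H *)
Definition phi_core (F G : grp) (deg : F -> int) (H : set G) (phi : F -> G) : set G :=
  [set x | (forall f : F, H (gmul (phi f) (gmul x (ginv (phi f))))) /\
           (forall f : F, deg f = 0%R -> gmul x (phi f) = gmul (phi f) x)].

Definition hom_tail (F G : grp) (deg : F -> int) (H : set G) (phi : F -> G) :
  ({f : F | deg f = 0%R} -> G) * (F -> set G) :=
  (fun f => phi (proj1_sig f), fun f => lcoset (phi f) H).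

Definition similar_hom (F G : grp) (deg : F -> int) (H : set G) (phi psi : F -> G) : Prop :=
  exists2 h, H h &
    (forall f, deg f = 0%R -> psi f = gmul h (gmul (phi f) (ginv h))) /\
    (forall f, lcoset (psi f) H = lcoset (gmul h (phi f)) H).

From mathcomp Require Import all_boot all_order all_algebra.
From mathcomp Require Import boolp classical_sets cardinality.
Set Implicit Arguments. Unset Strict Implicit. Unset Printing Implicit Defensive.
Import GRing.Theory.
Local Open Scope classical_set_scope.
Local Open Scope card_scope.
Local Open Scope ring_scope.

(* Fix f1 of degree one.  Every f is k f1^(deg f) with deg k = 0, so a
   homomorphism is determined by its restriction to ker deg and its value at
   f1.  For c in the core H_phi, the twist of phi by c (equal to phi on ker deg,
   f1 |-> phi(f1) c) is again a homomorphism with the tail of phi, and every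
   homomorphism with the tail of phi is such a twist for a unique c.
   Conjugates h phi h^-1 and k phi k^-1 (h, k in H) have the same tail iff
   k^-1 h lies in H_phi.  Hence the tails in the similarity class of phi
   correspond to the cosets H/H_phi, the fibre over each tail is in bijection
   with H_phi via c |-> h (twist of phi by c) h^-1, and choosing coset
   representatives identifies the whole class with H. *)

Section GroupTheory.
Variable G : grp.
Implicit Types x y z : G.

Lemma gmulKg x y : gmul (ginv x) (gmul x y) = y.
Proof. by rewrite gmulA gmulV gmul1. Qed.

Lemma gmulrV x : gmul x (ginv x) = gone.
Proof.
have := gmulKg (ginv x) (gmul x (ginv x)).
by rewrite (gmulA (ginv x) x) gmulV gmul1 gmulV.
Qed.

Lemma gmulg1 x : gmul x gone = x.
Proof. by rewrite -(gmulV x) gmulA gmulrV gmul1. Qed.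

Lemma gmulKVg x y : gmul x (gmul (ginv x) y) = y.
Proof. by rewrite gmulA gmulrV gmul1. Qed.

Lemma gmulgK x y : gmul (gmul y x) (ginv x) = y.
Proof. by rewrite -gmulA gmulrV gmulg1. Qed.

Lemma gmulgKV x y : gmul (gmul y (ginv x)) x = y.
Proof. by rewrite -gmulA gmulV gmulg1. Qed.

Lemma gmulgI x : injective (gmul x).
Proof. by move=> y z e; rewrite -(gmulKg x y) e gmulKg. Qed.

Lemma gmulIg x : injective (gmul^~ x).
Proof. by move=> y z e; rewrite -(gmulgK x y) /= e gmulgK. Qed.

Lemma ginv_uniq x y : gmul x y = gone -> ginv y = x.
Proof. by move=> e; rewrite -[x]gmulg1 -(gmulrV y) gmulA e gmul1. Qed.

Lemma ginvK x : ginv (ginv x) = x.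
Proof. exact: ginv_uniq (gmulrV x). Qed.

Lemma ginvM x y : ginv (gmul x y) = gmul (ginv y) (ginv x).
Proof. by apply: ginv_uniq; rewrite gmulA gmulgKV gmulV. Qed.

Lemma ginv1 : ginv (@gone G) = gone.
Proof. exact: ginv_uniq (gmul1 gone). Qed.

Definition gconj (y x : G) : G := gmul y (gmul x (ginv y)).

Lemma gconjM y z x : gconj (gmul y z) x = gconj y (gconj z x).
Proof. by rewrite /gconj ginvM !gmulA. Qed.

Lemma gconjK y x : gconj (ginv y) (gconj y x) = x.
Proof. by rewrite -gconjM gmulV /gconj ginv1 gmul1 gmulg1. Qed.

Lemma gconjKV y x : gconj y (gconj (ginv y) x) = x.
Proof. by rewrite -{1}(ginvK y) gconjK. Qed.

End GroupTheory.

Ltac gsimpl := repeat progress rewrite ?ginvM ?ginvK ?ginv1 ?gmulA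
  ?gmulgK ?gmulgKV ?gmulV ?gmulrV ?gmul1 ?gmulg1.

Section Homomorphisms.
Variables (F G : grp) (phi : F -> G).
Hypothesis phi_hom : is_hom phi.

Lemma hom1 : phi gone = gone.
Proof. by apply: (@gmulgI _ (phi gone)); rewrite -phi_hom gmul1 gmulg1. Qed.

Lemma homV x : phi (ginv x) = ginv (phi x).
Proof. by apply/esym/ginv_uniq; rewrite -phi_hom gmulV hom1. Qed.

Lemma hom_gconj y x : phi (gconj y x) = gconj (phi y) (phi x).
Proof. by rewrite /gconj !phi_hom homV. Qed.

End Homomorphisms.

Section Subgroups.
Variables (G : grp) (S : set G).
Hypothesis S_subgroup : is_subgroup S.

Lemma subgroup1 : S gone. Proof. by case: S_subgroup. Qed.

Lemma subgroupM x y : S x -> S y -> S (gmul x y).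
Proof. by case: S_subgroup => _ [SM _]; apply: SM. Qed.

Lemma subgroupVE x : S (ginv x) = S x.
Proof.
rewrite propeqE; case: S_subgroup => _ [_ SV]; split; last exact: SV.
by move/SV; rewrite ginvK.
Qed.

Lemma subgroupMlE x y : S x -> S (gmul x y) = S y.
Proof.
move=> Sx; rewrite propeqE; split; last exact: subgroupM.
by move=> Sxy; rewrite -(gmulKg x y); apply: subgroupM; rewrite // subgroupVE.
Qed.

Lemma lcosetP a y : lcoset a S y <-> S (gmul (ginv a) y).
Proof.
split; first by case=> h Sh <-; rewrite gmulKg.
by move=> Sy; exists (gmul (ginv a) y); rewrite ?gmulKVg.
Qed.

Lemma lcoset_eqP a b : lcoset a S = lcoset b S <-> S (gmul (ginv b) a).
Proof.
split=> [e | Sba].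
  by apply/lcosetP; rewrite -e; apply/lcosetP; rewrite gmulV; apply: subgroup1.
rewrite eqEsubset; split=> y /lcosetP Sy; apply/lcosetP.
  by rewrite -(gmulKVg a y) gmulA; apply: subgroupM.
rewrite -(gmulKVg b y) gmulA; apply: subgroupM => //.
by rewrite -subgroupVE ginvM ginvK.
Qed.

Lemma lcosetMr y s : S s -> lcoset (gmul y s) S = lcoset y S.
Proof. by move=> Ss; apply/lcoset_eqP; rewrite gmulA gmulV gmul1. Qed.

(* The default [gone] is never returned (cosets are nonempty); it does not
   depend on [h], so [coset_rep] only depends on the coset [lcoset h S]. *)
Definition coset_rep (h : G) : G := @xget {classic G} gone (lcoset h S).

Lemma coset_repP h : S (gmul (ginv h) (coset_rep h)).
Proof.
apply/lcosetP; apply: (@xgetI {classic G} gone _ h).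
by apply/lcosetP; rewrite gmulV; apply: subgroup1.
Qed.

Lemma lcoset_coset_rep h : lcoset (coset_rep h) S = lcoset h S.
Proof. exact/lcoset_eqP/coset_repP. Qed.

Lemma coset_rep_eq h k : lcoset h S = lcoset k S -> coset_rep h = coset_rep k.
Proof. by rewrite /coset_rep => ->. Qed.

End Subgroups.

Lemma int_ind_step (P : int -> Prop) :
  P 0 -> (forall z, P z -> P (z + 1)) -> (forall z, P z -> P (z - 1)) ->
  forall z, P z.
Proof.
move=> P0 PS PP; elim/int_rect => // n IH.
  by rewrite -addn1 PoszD; apply: PS.
by rewrite -addn1 PoszD opprD; apply: PP.
Qed.

Section IntegerPowers.
Variable G : grp.
Implicit Types (a : G) (m n : int).

Definition gexpz a m : G :=
  match m with
  | Posz n => iter n (gmul^~ a) gone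
  | Negz n => iter n.+1 (gmul^~ (ginv a)) gone
  end.

Lemma gexpz0 a : gexpz a 0 = gone. Proof. by []. Qed.

Lemma gexpz1 a : gexpz a 1 = a. Proof. exact: gmul1. Qed.

Lemma gexpzN1 a : gexpz a (-1) = ginv a. Proof. exact: gmul1. Qed.

Lemma gexpzS a m : gexpz a (m + 1) = gmul (gexpz a m) a.
Proof.
case: m => [n|[|n]]; first by rewrite -PoszD addn1.
  by rewrite /= gmul1 gmulV.
have -> : Negz n.+1 + 1 = Negz n by rewrite !NegzE -[n.+2]addn1 PoszD opprD subrK.
by rewrite /= gmulgKV.
Qed.

Lemma gexpzB1 a m : gexpz a (m - 1) = gmul (gexpz a m) (ginv a).
Proof. by rewrite -[in RHS](subrK 1 m) gexpzS gmulgK. Qed.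

Lemma gexpzD a m n : gexpz a (m + n) = gmul (gexpz a m) (gexpz a n).
Proof.
elim/int_ind_step: n => [|n IH|n IH]; first by rewrite addr0 gmulg1.
  by rewrite addrA !gexpzS IH gmulA.
by rewrite addrA !gexpzB1 IH gmulA.
Qed.

Lemma gexpzN a m : gexpz a (- m) = ginv (gexpz a m).
Proof. by apply/esym/ginv_uniq; rewrite -gexpzD addNr. Qed.

End IntegerPowers.

Lemma hom_gexpz (F G : grp) (phi : F -> G) a m :
  is_hom phi -> phi (gexpz a m) = gexpz (phi a) m.
Proof.
move=> phi_hom; elim/int_ind_step: m => [|m IH|m IH]; first exact: hom1.
  by rewrite !gexpzS phi_hom IH.
by rewrite !gexpzB1 phi_hom IH homV.
Qed.

Lemma card_eq_image_kernel {T U V} (A : set T) (f : T -> U) (g : T -> V) :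
  (forall x y, A x -> A y -> (f x = f y <-> g x = g y)) -> f @` A #= g @` A.
Proof.
move=> fg_ker; have [->|/set0P[x0 Ax0]] := eqVneq A set0.
  by rewrite !image_set0; apply: card_eq00.
pose r v := @xget {classic T} x0 [set x | A x /\ g x = v].
have rP v : (g @` A) v -> A (r v) /\ g (r v) = v.
  move=> [x Ax gx]; apply: (@xgetPex {classic T} x0 [set x | A x /\ g x = v]).
  by exists x.
have -> : f @` A = (f \o r) @` (g @` A).
  rewrite eqEsubset; split=> _ [x Ax <-].
    have [Arx grx] := rP (g x) (ex_intro2 _ _ x Ax erefl).
    by exists (g x); [exists x | apply/fg_ker].
  by have [Arx _] := rP x Ax; exists (r x).
apply: inj_card_eq => v w; rewrite !in_setE => /rP[Av gv] /rP[Aw gw] /= frvw.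
by rewrite -gv -gw; apply/(fg_ker _ _ Av Aw).
Qed.

Definition conj_hom (F G : grp) (h : G) (phi : F -> G) : F -> G :=
  fun f => gconj h (phi f).

Section ConjHom.
Variables (F G : grp) (phi : F -> G).

Lemma conj_hom_hom h : is_hom phi -> is_hom (conj_hom h phi).
Proof. by move=> phi_hom x y; rewrite /conj_hom /gconj phi_hom; gsimpl. Qed.

Lemma conj_homM h k : conj_hom h (conj_hom k phi) = conj_hom (gmul h k) phi.
Proof. by apply: funext => f; rewrite /conj_hom gconjM. Qed.

Lemma conj_hom1 : conj_hom gone phi = phi.
Proof. by apply: funext => f; rewrite /conj_hom /gconj; gsimpl. Qed.

End ConjHom.

Section IndexedGroups.
Variables (F G : grp) (deg : F -> int) (f1 : F).
Hypothesis degM : forall x y, deg (gmul x y) = deg x + deg y.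
Hypothesis deg_f1 : deg f1 = 1.

Lemma deg1 : deg gone = 0.
Proof. by apply: (addrI (deg gone)); rewrite -degM gmul1 addr0. Qed.

Lemma degV x : deg (ginv x) = - deg x.
Proof. by apply: (addrI (deg x)); rewrite -degM gmulrV deg1 subrr. Qed.

Lemma deg_gconj y x : deg (gconj y x) = deg x.
Proof. by rewrite /gconj !degM degV addrCA subrr addr0. Qed.

Lemma deg_gexpz a m : deg (gexpz a m) = m * deg a.
Proof.
elim/int_ind_step: m => [|m IH|m IH]; first by rewrite gexpz0 deg1 mul0r.
  by rewrite gexpzS degM IH mulrDl mul1r.
by rewrite gexpzB1 degM degV IH mulrBl mul1r.
Qed.

Definition ker_part (f : F) : F := gmul f (gexpz f1 (- deg f)).

Lemma deg_ker_part f : deg (ker_part f) = 0.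
Proof. by rewrite degM deg_gexpz deg_f1 mulr1 subrr. Qed.

Lemma ker_partK f : gmul (ker_part f) (gexpz f1 (deg f)) = f.
Proof. by rewrite /ker_part gexpzN gmulgKV. Qed.

Lemma ker_part_deg0 k : deg k = 0 -> ker_part k = k.
Proof. by move=> k0; rewrite /ker_part k0 oppr0 gexpz0 gmulg1. Qed.

Lemma ker_partM f g :
  ker_part (gmul f g) = gmul (ker_part f) (gconj (gexpz f1 (deg f)) (ker_part g)).
Proof.
by rewrite /ker_part /gconj degM opprD (addrC (- deg f)) gexpzD !gexpzN; gsimpl.
Qed.

Lemma deg_ind (P : F -> Prop) :
  (forall k, deg k = 0 -> P k) -> (forall f, P f -> P (gmul f f1)) ->
  (forall f, P f -> P (gmul f (ginv f1))) -> forall f, P f.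
Proof.
move=> P0 PS PV f; rewrite -(ker_partK f).
elim/int_ind_step: (deg f) => [|m IH|m IH].
- by rewrite gexpz0 gmulg1; apply/P0/deg_ker_part.
- by rewrite gexpzS gmulA; apply: PS.
- by rewrite gexpzB1 gmulA; apply: PV.
Qed.

Lemma eq_hom_ker_f1 (psi chi : F -> G) : is_hom psi -> is_hom chi ->
  (forall k, deg k = 0 -> psi k = chi k) -> psi f1 = chi f1 -> psi = chi.
Proof.
move=> psi_hom chi_hom e0 e1; apply: funext => f.
rewrite -(ker_partK f) psi_hom chi_hom (hom_gexpz _ _ psi_hom) (hom_gexpz _ _ chi_hom).
by rewrite e0 ?deg_ker_part // e1.
Qed.

Definition twist (phi : F -> G) (c : G) : F -> G :=
  fun f => gmul (phi (ker_part f)) (gexpz (gmul (phi f1) c) (deg f)).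

Lemma twist_deg0 phi c k : deg k = 0 -> twist phi c k = phi k.
Proof. by move=> k0; rewrite /twist ker_part_deg0 // k0 gexpz0 gmulg1. Qed.

Lemma twist_f1 phi c : is_hom phi -> twist phi c f1 = gmul (phi f1) c.
Proof.
by move=> phi_hom; rewrite /twist /ker_part deg_f1 gexpzN1 gexpz1 gmulrV hom1 // gmul1.
Qed.

Section TwistHom.
Variables (phi : F -> G) (c : G).
Hypothesis phi_hom : is_hom phi.
Hypothesis c_cent : forall k, deg k = 0 -> gmul c (phi k) = gmul (phi k) c.
Local Notation a := (gmul (phi f1) c).

Lemma twist_gen_conj k : deg k = 0 -> gmul a (phi k) = gmul (phi (gconj f1 k)) a.
Proof. by move=> k0; rewrite -gmulA c_cent // hom_gconj // /gconj; gsimpl. Qed.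

Lemma twist_gen_conjV k :
  deg k = 0 -> gmul (ginv a) (phi k) = gmul (phi (gconj (ginv f1) k)) (ginv a).
Proof.
move=> k0; have k'0 : deg (gconj (ginv f1) k) = 0 by rewrite deg_gconj.
have := twist_gen_conj k'0; rewrite gconjKV => e.
by rewrite -(gmulgK a (phi k)) -e; gsimpl.
Qed.

Lemma twist_gen_conj_gexpz m k : deg k = 0 ->
  gmul (gexpz a m) (phi k) = gmul (phi (gconj (gexpz f1 m) k)) (gexpz a m).
Proof.
elim/int_ind_step: m k => [|m IH|m IH] k k0.
- by rewrite !gexpz0 /gconj; gsimpl.
- rewrite !gexpzS gconjM -gmulA twist_gen_conj // gmulA IH ?deg_gconj //.
  by rewrite -!gmulA.
- rewrite !gexpzB1 gconjM -gmulA twist_gen_conjV // gmulA IH ?deg_gconj //.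
  by rewrite -!gmulA.
Qed.

Lemma twist_hom : is_hom (twist phi c).
Proof.
move=> f g; rewrite /twist ker_partM phi_hom degM gexpzD -!gmulA; congr gmul.
by rewrite !gmulA twist_gen_conj_gexpz ?deg_ker_part.
Qed.

End TwistHom.

Variable H : set G.
Hypothesis H_subgroup : is_subgroup H.
Local Notation core := (phi_core deg H).
Local Notation tail := (hom_tail deg H).

Lemma hom_tail_eqP psi chi : tail psi = tail chi <->
  (forall k, deg k = 0 -> psi k = chi k) /\
  (forall f, lcoset (psi f) H = lcoset (chi f) H).
Proof.
split=> [e | [e0 e1]].
  split=> [k k0 | f]; first exact: (congr1 (fun t => t.1 (exist _ k k0)) e).
  exact: (congr1 (fun t => t.2 f) e).
by congr pair; apply: funext; [case=> k k0; apply: e0 | apply: e1].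
Qed.

Lemma hom_tail_eq_homP psi chi : is_hom psi -> is_hom chi ->
  tail psi = tail chi <->
  (forall k, deg k = 0 -> psi k = chi k) /\
  (forall f, H (gmul (psi f) (ginv (chi f)))).
Proof.
move=> psi_hom chi_hom.
have cosetE f : lcoset (psi (ginv f)) H = lcoset (chi (ginv f)) H <->
                H (gmul (psi f) (ginv (chi f))).
  rewrite (homV psi_hom) (homV chi_hom) (lcoset_eqP H_subgroup) ginvK.
  by rewrite -(subgroupVE H_subgroup (gmul (psi f) _)) ginvM ginvK.
split=> [/hom_tail_eqP[e0 e1] | [e0 e1]].
  by split=> // f; apply/cosetE.
apply/hom_tail_eqP; split=> // f; rewrite -(ginvK f); exact/cosetE.
Qed.

Lemma similar_homP phi psi : similar_hom deg H phi psi <->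
  exists2 h, H h & tail psi = tail (conj_hom h phi).
Proof.
have cosetE h f : H h -> lcoset (conj_hom h phi f) H = lcoset (gmul h (phi f)) H.
  move=> Hh; rewrite /conj_hom /gconj gmulA (lcosetMr H_subgroup) //.
  by rewrite subgroupVE.
split=> [[h Hh [e0 e1]] | [h Hh /hom_tail_eqP[e0 e1]]]; exists h => //.
  by apply/hom_tail_eqP; split=> // f; rewrite e1 cosetE.
by split=> // f; rewrite e1 cosetE.
Qed.

Lemma hom_tail_conj h psi chi : H h ->
  tail psi = tail chi -> tail (conj_hom h psi) = tail (conj_hom h chi).
Proof.
move=> Hh /hom_tail_eqP[e0 e1]; apply/hom_tail_eqP.
split=> [k k0 | f]; first by rewrite /conj_hom e0.
have Hh' : H (ginv h) by rewrite subgroupVE.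
rewrite /conj_hom /gconj !gmulA !(lcosetMr H_subgroup _ Hh').
apply/(lcoset_eqP H_subgroup); gsimpl; exact/(lcoset_eqP H_subgroup)/e1.
Qed.

Section Core.
Variable phi : F -> G.

Lemma core_subgroup : is_subgroup (core phi).
Proof.
split; [|split].
- split=> [f | k _]; last by rewrite gmul1 gmulg1.
  by rewrite gmul1 gmulrV; apply: subgroup1.
- move=> x y [xH xK] [yH yK]; split=> [f | k k0].
    by have := subgroupM H_subgroup (xH f) (yH f); gsimpl.
  by rewrite -gmulA yK // gmulA xK // gmulA.
- move=> x [xH xK]; split=> [f | k k0].
    by rewrite -subgroupVE //; have := xH f; gsimpl.
  by rewrite -[in LHS](gmulgK x (phi k)) -xK //; gsimpl.
Qed.

Hypothesis phi_hom : is_hom phi.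

Lemma core_subset x : core phi x -> H x.
Proof. by case=> /(_ gone); rewrite hom1 // ginv1 gmul1 gmulg1. Qed.

Lemma hom_tail_conj_selfP x : H x -> tail (conj_hom x phi) = tail phi <-> core phi x.
Proof.
move=> Hx; have conj_phi_hom := conj_hom_hom x phi_hom.
split=> [/(hom_tail_eq_homP conj_phi_hom phi_hom)[e0 e1] | [cH cK]].
  split=> [f | k k0].
    have := e1 f; rewrite /conj_hom /gconj -gmulA (subgroupMlE H_subgroup _ Hx).
    by rewrite -subgroupVE //; gsimpl.
  by rewrite -{2}(e0 k k0) /conj_hom /gconj; gsimpl.
apply/(hom_tail_eq_homP conj_phi_hom phi_hom); split=> [k k0 | f].
  by rewrite /conj_hom /gconj gmulA cK // gmulgK.
rewrite /conj_hom /gconj -gmulA (subgroupMlE H_subgroup _ Hx) -subgroupVE //.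
by have := cH f; gsimpl.
Qed.

Lemma hom_tail_conjP h k : H h -> H k ->
  tail (conj_hom h phi) = tail (conj_hom k phi) <-> core phi (gmul (ginv k) h).
Proof.
move=> Hh Hk; have Hk' : H (ginv k) by rewrite subgroupVE.
have Hkh : H (gmul (ginv k) h) by apply: subgroupM.
split=> [e | /(hom_tail_conj_selfP Hkh) e].
  apply/(hom_tail_conj_selfP Hkh).
  by have := hom_tail_conj Hk' e; rewrite !conj_homM gmulV conj_hom1.
by have := hom_tail_conj Hk e; rewrite !conj_homM gmulKVg.
Qed.

Section CoreTwist.
Variable c : G.
Hypothesis c_core : core phi c.
Let twist_c_hom : is_hom (twist phi c) := twist_hom phi_hom (proj2 c_core).

Lemma twist_right_coset f : H (gmul (twist phi c f) (ginv (phi f))).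
Proof.
elim/deg_ind: f => [k k0 | f IH | f IH].
- by rewrite twist_deg0 // gmulrV; apply: subgroup1.
- have := subgroupM H_subgroup IH (proj1 c_core (gmul f f1)).
  by rewrite twist_c_hom twist_f1 // !phi_hom; gsimpl.
- have Hc : H (ginv (gmul (phi f) (gmul c (ginv (phi f))))).
    by rewrite subgroupVE //; apply: (proj1 c_core).
  have := subgroupM H_subgroup IH Hc.
  by rewrite twist_c_hom (homV twist_c_hom) twist_f1 // phi_hom (homV phi_hom); gsimpl.
Qed.

Lemma hom_tail_twist : tail (twist phi c) = tail phi.
Proof.
apply/(hom_tail_eq_homP twist_c_hom phi_hom).
by split=> [k k0 | f]; [apply: twist_deg0 | apply: twist_right_coset].
Qed.

End CoreTwist.

Lemma hom_tail_twistP chi : is_hom chi ->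
  tail chi = tail phi <-> exists2 c, core phi c & chi = twist phi c.
Proof.
move=> chi_hom; split=> [/(hom_tail_eq_homP chi_hom phi_hom)[e0 e1] | [c c_core ->]].
  pose c := gmul (ginv (phi f1)) (chi f1).
  have c_core : core phi c.
    split=> [f | k k0].
      pose g := gmul f (ginv f1).
      have Hg : H (ginv (gmul (chi g) (ginv (phi g)))).
        by rewrite subgroupVE //; apply: e1.
      have := subgroupM H_subgroup Hg (e1 f).
      by rewrite chi_hom phi_hom (homV chi_hom) (homV phi_hom) /c; gsimpl.
    have e : gconj (chi f1) (phi k) = gconj (phi f1) (phi k).
      by rewrite -[in LHS]e0 // -!hom_gconj // e0 // deg_gconj.
    transitivity (gmul (gmul (ginv (phi f1)) (gconj (chi f1) (phi k))) (chi f1)).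
      by rewrite /c /gconj; gsimpl.
    by rewrite e /c /gconj; gsimpl.
  exists c => //; apply: eq_hom_ker_f1 => //.
    exact: twist_hom phi_hom (proj2 c_core).
    by move=> k k0; rewrite twist_deg0 // e0.
  by rewrite twist_f1 // /c gmulKVg.
exact: hom_tail_twist.
Qed.

Lemma hom_tail_conj_twistP chi h : is_hom chi -> H h ->
  tail chi = tail (conj_hom h phi) <->
  exists2 c, core phi c & chi = conj_hom h (twist phi c).
Proof.
move=> chi_hom Hh; have Hh' : H (ginv h) by rewrite subgroupVE.
split=> [e | [c c_core ->]]; last exact/hom_tail_conj/hom_tail_twist.
have /(hom_tail_twistP (conj_hom_hom _ chi_hom))[c c_core e'] :
    tail (conj_hom (ginv h) chi) = tail phi.
  by have := hom_tail_conj Hh' e; rewrite conj_homM gmulV conj_hom1.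
by exists c; rewrite // -e' conj_homM gmulrV conj_hom1.
Qed.

Lemma conj_twist_inj h c d :
  conj_hom h (twist phi c) = conj_hom h (twist phi d) -> c = d.
Proof.
move/(congr1 (fun psi => psi f1)); rewrite /conj_hom !twist_f1 // /gconj.
by move/gmulgI/gmulIg/gmulgI.
Qed.

End Core.

Section SimilarityClasses.
Variable Phi : set (F -> G).
Hypothesis Phi_hom : forall phi, Phi phi -> is_hom phi.
Hypothesis Phi_conj : forall h phi, H h -> Phi phi ->
  Phi (fun f => gmul (ginv h) (gmul (phi f) h)).
Hypothesis Phi_twist : forall phi h psi, Phi phi -> core phi h -> is_hom psi ->
  (forall f, deg f = 0 -> psi f = phi f) ->
  (exists f1, deg f1 = 1 /\ psi f1 = gmul (phi f1) h) -> Phi psi.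
Variable phi : F -> G.
Hypothesis Phi_phi : Phi phi.
Let phi_hom := Phi_hom Phi_phi.
Local Notation class := [set psi | Phi psi /\ similar_hom deg H phi psi].

Lemma Phi_conj_twist h c : H h -> core phi c -> Phi (conj_hom h (twist phi c)).
Proof.
move=> Hh c_core; have Hh' : H (ginv h) by rewrite subgroupVE.
have Phi_twist_c : Phi (twist phi c).
  apply: (Phi_twist Phi_phi c_core); first exact: twist_hom phi_hom (proj2 c_core).
    exact: twist_deg0.
  by exists f1; rewrite twist_f1.
by have := Phi_conj Hh' Phi_twist_c; rewrite ginvK.
Qed.

Lemma similar_classP chi : class chi <->
  is_hom chi /\ exists2 h, H h & tail chi = tail (conj_hom h phi).
Proof.
split=> [[Pchi /similar_homP sim] | [chi_hom [h Hh e]]].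
  by split; [apply: Phi_hom|].
split; last by apply/similar_homP; exists h.
have [c c_core ->] := (hom_tail_conj_twistP phi_hom chi_hom Hh).1 e.
exact: Phi_conj_twist.
Qed.

Lemma card_tail_fiber psi : class psi ->
  [set chi | Phi chi /\ tail chi = tail psi] #= core phi.
Proof.
case/similar_classP=> psi_hom [h Hh e].
have -> : [set chi | Phi chi /\ tail chi = tail psi] =
          (fun c => conj_hom h (twist phi c)) @` core phi.
  rewrite eqEsubset; split=> [chi [Pchi] | _ [c c_core <-]].
    rewrite e => /(hom_tail_conj_twistP phi_hom (Phi_hom Pchi) Hh)[c c_core ->].
    by exists c.
  split; first exact: Phi_conj_twist.
  rewrite e; apply/(hom_tail_conj_twistP phi_hom _ Hh); last by exists c.
  exact/conj_hom_hom/twist_hom/(proj2 c_core).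
by apply: inj_card_eq => c d _ _; apply: conj_twist_inj.
Qed.

Lemma card_similar_tails :
  [set tail psi | psi in class] #= [set lcoset x (core phi) | x in H].
Proof.
have -> : [set tail psi | psi in class] = (fun h => tail (conj_hom h phi)) @` H.
  rewrite eqEsubset; split=> [_ [psi /similar_classP[_ [h Hh e]] <-] | _ [h Hh <-]].
    by exists h.
  exists (conj_hom h phi) => //; apply/similar_classP.
  by split; [apply: conj_hom_hom | exists h].
apply: card_eq_image_kernel => h k Hh Hk /=.
exact: iff_trans (hom_tail_conjP phi_hom Hh Hk)
                 (iff_sym (lcoset_eqP (core_subgroup phi) h k)).
Qed.

Local Notation r := (coset_rep (core phi)).

Lemma core_coset_offset h : core phi (gmul (ginv (r h)) h).
Proof.
rewrite -(subgroupVE (core_subgroup phi)) ginvM ginvK.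
exact: (coset_repP (core_subgroup phi)).
Qed.

Lemma coset_rep_subgroup h : H h -> H (r h).
Proof.
move=> Hh; rewrite -(gmulKVg h (r h)); apply: subgroupM => //.
exact/(core_subset phi_hom)/(coset_repP (core_subgroup phi)).
Qed.

(* Writing h = r c with r the chosen representative of h H_phi and c in H_phi,
   this parametrises the similarity class by H. *)
Definition class_param (h : G) : F -> G :=
  conj_hom (r h) (twist phi (gmul (ginv (r h)) h)).

Lemma hom_tail_class_param h :
  H h -> tail (class_param h) = tail (conj_hom (r h) phi).
Proof.
rewrite /class_param.
move=> Hh; apply: hom_tail_conj (coset_rep_subgroup Hh) _.
exact (hom_tail_twist phi_hom (core_coset_offset h)).
Qed.

Lemma similar_classE : class = class_param @` H.
Proof.
rewrite eqEsubset; split=> [psi /similar_classP[psi_hom [h Hh e]] | _ [h Hh <-]].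
  have Hrh := coset_rep_subgroup Hh.
  have /(hom_tail_conj_twistP phi_hom psi_hom Hrh)[c c_core ->] :
      tail psi = tail (conj_hom (r h) phi).
    by rewrite e; apply/(hom_tail_conjP phi_hom Hh Hrh)/core_coset_offset.
  exists (gmul (r h) c).
    by have := subgroupM H_subgroup Hrh (core_subset phi_hom c_core).
  have r_rc : r (gmul (r h) c) = r h.
    apply: coset_rep_eq; rewrite (lcosetMr (core_subgroup phi)) //.
    by rewrite (lcoset_coset_rep (core_subgroup phi)).
  by rewrite /class_param r_rc gmulKg.
apply/similar_classP; split.
  exact/conj_hom_hom/twist_hom/(proj2 (core_coset_offset h)).
by exists (r h); [apply: coset_rep_subgroup | apply: hom_tail_class_param].
Qed.

Lemma class_param_inj : {in H &, injective class_param}.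
Proof.
move=> h k; rewrite !in_setE => Hh Hk e.
have r_hk : r h = r k.
  apply: coset_rep_eq.
  rewrite -(lcoset_coset_rep (core_subgroup phi) h).
  rewrite -(lcoset_coset_rep (core_subgroup phi) k).
  apply/(lcoset_eqP (core_subgroup phi)).
  apply/(hom_tail_conjP phi_hom (coset_rep_subgroup Hh) (coset_rep_subgroup Hk)).
  by rewrite -!hom_tail_class_param // e.
by move: e; rewrite /class_param r_hk => /(conj_twist_inj phi_hom)/gmulgI.
Qed.

Lemma card_similar_class : class #= H.
Proof. by rewrite similar_classE; apply: inj_card_eq class_param_inj. Qed.

End SimilarityClasses.
End IndexedGroups.

Theorem mainTheorem11 (F G : grp) (deg : F -> int) (H : set G) (Phi : set (F -> G)) :
  is_degree deg ->
  is_subgroup H ->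
  (forall phi, Phi phi -> is_hom phi) ->
  (* (I) *)
  (forall h phi, H h -> Phi phi -> Phi (fun f => gmul (ginv h) (gmul (phi f) h))) ->
  (* (II) *)
  (forall phi h psi, Phi phi -> phi_core deg H phi h -> is_hom psi ->
     (forall f, deg f = 0%R -> psi f = phi f) ->
     (exists f1, deg f1 = 1%R /\ psi f1 = gmul (phi f1) h) ->
     Phi psi) ->
  forall phi, Phi phi ->
    [set psi | Phi psi /\ similar_hom deg H phi psi] #= H /\
    [set hom_tail deg H psi | psi in [set psi | Phi psi /\ similar_hom deg H phi psi]]
      #= [set lcoset x (phi_core deg H phi) | x in H] /\
    (forall psi, Phi psi -> similar_hom deg H phi psi ->
       [set chi | Phi chi /\ hom_tail deg H chi = hom_tail deg H psi] #= phi_core deg H phi).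
Proof.
move=> [degM deg_onto] H_subgroup Phi_hom Phi_conj Phi_twist phi Phi_phi.
have [f1 deg_f1] := deg_onto 1.
have card_class := card_similar_class degM deg_f1 H_subgroup Phi_hom Phi_conj Phi_twist.
have card_tails := card_similar_tails degM deg_f1 H_subgroup Phi_hom Phi_conj Phi_twist.
have card_fiber := card_tail_fiber degM deg_f1 H_subgroup Phi_hom Phi_conj Phi_twist.
split; first exact (card_class _ Phi_phi).
split; first exact (card_tails _ Phi_phi).
by move=> psi Phi_psi sim; apply: card_fiber Phi_phi _ (conj Phi_psi sim).
Qed.
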